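(* For every $n\ge 0$, $L(C_n)=B_n$, where the Bernoulli numbers are defined by $\sum_{n\ge0}B_n\frac{x^n}{n!}=\frac{x}{e^x-1}$. Equivalently, with $L_\sigma:=L\circ A_\sigma^{-1}$, $L_\sigma(C_n)=B_n/n!$.
   Context: Let $k$ be a field of characteristic $0$. Rooted trees are finite and non-planar; $\bullet$ is the one-vertex tree. $\mathcal H$ is the free commutative $k$-algebra generated by isomorphism classes of rooted trees with at least one edge, with unit identified with $\bullet$. A subforest of a rooted tree $t$ is either $\bullet$ or a nonempty set of pairwise vertex-disjoint subtrees each with at least one edge, identified with the product of its components; $t/s$ is the tree obtained by contracting each component of $s$ to a vertex. $\mathcal H$ is a Hopf algebra with multiplicative coproduct $\Delta(t)=\sum_s s\otimes t/s$ over subforests (as subsets), antipode $S$, convolution $f\star g=(f\otimes g)\circ\Delta$. The tree factorial: $\bullet!=1$, $B_+(t_1\cdots t_n)!=v(B_+(t_1\cdots t_n))\prod_jt_j!$, with $B_+$ grafting on a new root and $v$ the number of vertices. $E$ is the character of $\mathcal H$ with $E(t)=1/t!$, and $L=E\circ S$ its $\star$-inverse. $C_n$ is the corolla with $n$ edges ($C_0=\bullet$). $A_\sigma(s)=\sigma(s)s$ for forests $s=t_1\cdots t_m$, $\sigma(s)=\prod|\mathrm{Aut}(t_j)|$. *)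

From HB Require Import structures.
From mathcomp Require Import all_boot all_order all_algebra all_fingroup.
Set Implicit Arguments. Unset Strict Implicit. Unset Printing Implicit Defensive.
Import Order.TTheory GRing.Theory Num.Theory.
Local Open Scope ring_scope.

(* A rooted tree with n+1 vertices 0..n (root 0) is encoded by its parent
   list p = [:: par 1; ...; par n] with par v < v.  Isomorphism classes are
   not quotiented: every function below is isomorphism-invariant. *)
Definition tree := seq nat.

Definition par (p : tree) (v : nat) : nat :=
  if v is v'.+1 then nth 0%N p v' else 0%N.

(* A subforest of t is encoded by a set of edges m : bitseq of size |t|
   (edge v = (par v, v) for v > 0); the components of the forest are the
   connected components of the edge set; the empty set is the trivial
   subforest "bullet". *)
Definition in_edges (m : bitseq) (v : nat) : bool := (0 < v)%N && nth false m v.-1.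

Fixpoint all_masks (n : nat) : seq bitseq :=
  if n is n'.+1 then [seq b :: m | b <- [:: false; true], m <- all_masks n']
  else [:: [::]].

(* top vertex of the component (of the contracted tree) containing v *)
Fixpoint rep_f (p : tree) (m : bitseq) (k v : nat) : nat :=
  if k is k'.+1 then (if in_edges m v then rep_f p m k' (par p v) else v) else v.
Definition rep p m v := rep_f p m v v.

(* vertices of t/s *)
Definition kept (p : tree) (m : bitseq) : seq nat :=
  [seq v <- iota 0 (size p).+1 | ~~ in_edges m v].

Definition quot (p : tree) (m : bitseq) : tree :=
  let K := kept p m in [seq index (rep p m (par p v)) K | v <- behead K].

(* the component of s with top vertex r (the one-vertex tree if none) *)
Definition forest_comp (p : tree) (m : bitseq) (r : nat) : tree :=
  let C := [seq v <- iota 0 (size p).+1 | (v == r) || (in_edges m v && (rep p m v == r))] in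
  [seq index (par p v) C | v <- behead C].

(* u is a descendant of v (or u = v) *)
Fixpoint anc_f (p : tree) (k v u : nat) : bool :=
  (u == v) || (if k is k'.+1 then (0 < u)%N && anc_f p k' v (par p u) else false).
Definition desc p v u := anc_f p u v u.

Definition subsize (p : tree) (v : nat) : nat :=
  count (desc p v) (iota 0 (size p).+1).

(* tree factorial: product over vertices of subtree sizes (the unfolding of
   bullet! = 1, B_+(t_1...t_n)! = v(B_+(...)) prod t_j!) *)
Definition tfact (p : tree) : nat := \prod_(v <- iota 0 (size p).+1) subsize p v.

Section Char.
Variable F : fieldType.

Definition Echar (p : tree) : F := (tfact p)%:R^-1.

(* L = E o S, computed as the convolution inverse of the character E:
   (L * E)(t) = sum_s L(s) E(t/s) = eps(t) = 0 for t with an edge,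
   with L multiplicative on forests and L(bullet) = 1. *)
Fixpoint Lf (k : nat) (p : tree) : F :=
  if k is k'.+1 then
    (if size p == 0%N then 1 else
     - \sum_(m <- all_masks (size p) | m != nseq (size p) true)
         (\prod_(r <- kept p m) Lf k' (forest_comp p m r)) * Echar (quot p m))
  else 1.
Definition Lchar (p : tree) : F := Lf (size p) p.

Definition autcard (p : tree) : nat :=
  #|[pred s : {perm 'I_(size p).+1} | (s ord0 == ord0) &&
     [forall v : 'I_(size p).+1, (0 < val v)%N ==>
        (val (s (inord (par p v))) == par p (val (s v)))]]|.

(* L_sigma = L o A_sigma^{-1}; on a tree t, A_sigma^{-1} t = t / sigma(t) *)
Definition Lsigma (p : tree) : F := Lchar p / (autcard p)%:R.

(* Bernoulli numbers: coefficients of x/(e^x-1) = sum B_n x^n/n!, i.e. the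
   coefficientwise identity (sum B_k x^k/k!)(sum x^j/(j+1)!) = 1:
   B_0 = 1 and sum_{k<=N} B_k/(k! (N-k+1)!) = 0 for N >= 1. *)
Fixpoint bseq (n : nat) : seq F :=
  if n is n'.+1 then
    let s := bseq n' in
    rcons s (- \sum_(k < n) s`_k * (n`!%:R / (k`!%:R * ((n - k).+1)`!%:R)))
  else [:: 1].
Definition bernoulli (n : nat) : F := (bseq n)`_n.

End Char.

Definition corolla (n : nat) : tree := nseq n 0%N.

From Pilot Require Import Defs.
From HB Require Import structures.
From mathcomp Require Import all_boot all_order all_algebra all_fingroup.
From mathcomp Require Import ring.
Import GRing.Theory.

(* L is the convolution inverse of the character E : t |-> 1/t!, so for a
   tree t with an edge, L(t) = - sum over proper subforests s of
   L(s) E(t/s).  For the corolla C_N every subforest is determined by the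
   set of its k edges (0 <= k <= N, 'C(N, k) choices); its only nontrivial
   component is the corolla C_k, the other kept leaves are one-vertex
   trees with L = 1, and the quotient is C_(N-k), whose factorial is N-k+1.
   Hence L(C_N) = - sum_(k<N) 'C(N, k) L(C_k) / (N-k+1), which is the
   defining recursion B_N = - sum_(k<N) B_k N! / (k! (N-k+1)!) of the
   Bernoulli numbers; strong induction on N gives L(C_N) = B_N.  Finally
   |Aut(C_n)| = n! since every permutation of the leaves is an automorphism. *)

Lemma par_corolla (n v : nat) : par (corolla n) v = 0%N.
Proof. by case: v => //= v; rewrite nth_nseq if_same. Qed.

Lemma rep_corolla (n : nat) (m : bitseq) (v : nat) :
  rep (corolla n) m v = if in_edges m v then 0%N else v.
Proof.
rewrite /rep; case: v => [|v] //; rewrite [rep_f _ _ _ _]/=.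
by rewrite nth_nseq if_same; case: ifP => //; case: v.
Qed.

Lemma kept_corolla (n : nat) (m : bitseq) :
  kept (corolla n) m = 0%N :: [seq v <- iota 1 n | ~~ in_edges m v].
Proof. by rewrite /kept size_nseq. Qed.

Definition nedges (m : bitseq) (n : nat) : nat := count (in_edges m) (iota 1 n).

Lemma map_const (T : Type) (s : seq T) (c : nat) : [seq c | _ <- s] = nseq (size s) c.
Proof. by elim: s => //= x s ->. Qed.

Lemma root_comp_corolla (n : nat) (m : bitseq) :
  forest_comp (corolla n) m 0 = corolla (nedges m n).
Proof.
rewrite /forest_comp size_nseq /= /corolla.
set C := filter _ (iota 1 n).
have -> : [seq index (par (nseq n 0) v) (0 :: C) | v <- C] = [seq 0%N | _ <- C].
  by apply: eq_map => v; rewrite (par_corolla n).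
rewrite map_const size_filter /nedges; congr nseq; apply: eq_in_count => v.
rewrite mem_iota => /andP[v_gt0 _].
rewrite (_ : (v == 0%N) = false); last by case: v v_gt0.
by case E: (in_edges m v) => //=; rewrite (rep_corolla n) E.
Qed.

Lemma leaf_comp_corolla (n : nat) (m : bitseq) (r : nat) :
  r \in kept (corolla n) m -> r != 0%N -> forest_comp (corolla n) m r = [::].
Proof.
rewrite kept_corolla inE => /orP[/eqP-> //|]; rewrite mem_filter mem_iota add1n.
case/andP=> r_free /andP[_ r_le] r_neq0.
apply/nilP; rewrite /nilp /forest_comp size_map size_behead size_filter size_nseq.
rewrite (@eq_count _ _ (pred1 r)).
  by rewrite count_uniq_mem ?iota_uniq // mem_iota add0n r_le.
move=> v; rewrite rep_corolla; case: (v =P r) => [->|v_neq_r] /=.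
  by rewrite eqxx.
rewrite (introF eqP v_neq_r); case: (in_edges m v) => //=.
by rewrite eq_sym (negbTE r_neq0).
Qed.

Lemma quot_corolla (n : nat) (m : bitseq) :
  quot (corolla n) m = corolla (n - nedges m n).
Proof.
rewrite /quot kept_corolla /= /corolla.
set C := filter _ (iota 1 n).
have -> : [seq index (rep (nseq n 0) m (par (nseq n 0) v)) (0 :: C) | v <- C]
          = [seq 0%N | _ <- C].
  by apply: eq_map => v; rewrite (par_corolla n) (rep_corolla n); case: in_edges.
rewrite map_const size_filter; congr nseq.
by have := count_predC (in_edges m) (iota 1 n); rewrite size_iota /nedges => {2}<-; rewrite addKn.
Qed.

(* C_j! = j+1: the root has j+1 descendants, each leaf only itself. *)
Lemma tfact_corolla (j : nat) : tfact (corolla j) = j.+1.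
Proof.
rewrite /tfact size_nseq /= big_cons.
have -> : subsize (corolla j) 0 = j.+1.
  rewrite /subsize size_nseq -[RHS](size_iota 0 j.+1) -count_predT.
  apply: eq_count => u; rewrite /desc; case: u => //= u.
  by rewrite nth_nseq if_same; case: u.
rewrite big_seq big1 ?muln1 // => v; rewrite mem_iota => /andP[v_gt0 v_le].
rewrite /subsize size_nseq (@eq_count _ _ (pred1 v)).
  by rewrite count_uniq_mem ?iota_uniq // mem_iota add0n -add1n v_le.
have root_not_desc k : anc_f (corolla j) k v 0 = false.
  by case: k => [|k]; rewrite /= ?andbF orbF; case: v v_gt0 v_le.
move=> u; rewrite /desc /pred1; case: u => [|u]; first by rewrite [anc_f _ _ _ _]/= orbF.
by rewrite [anc_f _ _ _ _]/= nth_nseq if_same root_not_desc orbF.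
Qed.

(* |Aut(C_n)| = n!: the automorphisms are exactly the permutations fixing
   the root. *)
Lemma autcard_corolla (n : nat) : autcard (corolla n) = n`!.
Proof.
rewrite /autcard size_nseq.
have := card_perm [set~ (ord0 : 'I_n.+1)]; rewrite cardsC1 card_ord /= => <-.
apply: eq_card => s; rewrite !inE; apply/idP/idP.
  case/andP=> /eqP s0 _; rewrite unfold_in; apply/subsetP => x; rewrite !inE.
  by apply: contra => /eqP ->; rewrite s0.
move=> s_on; have s0 : s ord0 = ord0 by apply: (out_perm s_on); rewrite !inE eqxx.
rewrite s0 eqxx /=; apply/forallP => v; apply/implyP => _.
rewrite !par_corolla.
have -> : inord 0 = ord0 :> 'I_n.+1 by apply: val_inj; rewrite /= inordK.
by rewrite s0.
Qed.

Lemma nedges_cons (b : bool) (m : bitseq) :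
  nedges (b :: m) (size m).+1 = (b + nedges m (size m))%N.
Proof.
rewrite /nedges /= (iotaDl 1 1) count_map; congr addn.
by apply: eq_in_count => v; rewrite mem_iota => /andP[v_gt0 _] /=; case: v v_gt0.
Qed.

Lemma nedges_full (m : bitseq) : nedges m (size m) = count id m.
Proof. by elim: m => [|b m IH] //=; rewrite nedges_cons IH. Qed.

Lemma size_masks {n : nat} {m : bitseq} : m \in all_masks n -> size m = n.
Proof.
elim: n m => [|n IH] m /=; first by rewrite inE => /eqP ->.
by rewrite cats0 mem_cat => /orP[] /mapP[m' /IH <- ->].
Qed.

Lemma full_maskE (n : nat) (m : bitseq) :
  size m = n -> (m == nseq n true) = (count id m == n).
Proof.
move=> <-; rewrite -all_count (sameP eqP (all_pred1P true m)).
by apply: eq_all => b; case: b.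
Qed.

Local Open Scope ring_scope.

Lemma sum_masks (R : nzRingType) (n : nat) (G : nat -> R) :
  \sum_(m <- all_masks n) G (count id m) = \sum_(k < n.+1) 'C(n, k)%:R * G k.
Proof.
elim: n G => [|n IH] G /=; first by rewrite big_seq1 big_ord_recl big_ord0 /= addr0 mul1r.
rewrite cats0 big_cat !big_map /=.
rewrite (IH G) (eq_bigr (fun m => G (1 + count id m)%N)) // (IH (fun k => G (1 + k)%N)).
rewrite [in RHS]big_ord_recl /= bin0.
under [in RHS]eq_bigr do rewrite binS natrD mulrDl.
rewrite big_split /= addrA; congr (_ + _).
rewrite [in RHS]big_ord_recr /= bin_small // mul0r addr0.
by rewrite big_ord_recl /= bin0.
Qed.

Section Bernoulli.
Variable F : fieldType.

Lemma size_bseq (n : nat) : size (Defs.bseq F n) = n.+1.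
Proof. by elim: n => //= n IH; rewrite size_rcons IH. Qed.

Lemma nth_bseq (n k : nat) : (k <= n)%N -> (Defs.bseq F n)`_k = bernoulli F k.
Proof.
elim: n k => [|n IH] k; first by rewrite leqn0 => /eqP ->.
rewrite leq_eqVlt => /orP[/eqP -> //|k_lt].
by rewrite /= nth_rcons size_bseq k_lt IH.
Qed.

Lemma bernoulli_rec (n : nat) : bernoulli F n.+1 =
  - \sum_(k < n.+1) bernoulli F k * ((n.+1)`!%:R / (k`!%:R * ((n.+1 - k).+1)`!%:R)).
Proof.
rewrite {1}/bernoulli /= nth_rcons size_bseq ltnn eqxx; congr (- _).
by apply: eq_bigr => k _; rewrite nth_bseq // -ltnS.
Qed.

Lemma binom_div_succ (hF : [pchar F] =i pred0) (N k : nat) : (k <= N)%N ->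
  'C(N, k)%:R / (N - k).+1%:R = N`!%:R / (k`!%:R * (N - k).+1`!%:R) :> F.
Proof.
move=> k_le; have nz j : (0 < j)%N -> j%:R != 0 :> F.
  by move=> j_gt0; rewrite ((pcharf0P F).1 hF) -lt0n.
rewrite -(bin_fact k_le) factS !natrM.
have a0 : k`!%:R != 0 :> F by apply/nz/fact_gt0.
have b0 : (N - k)`!%:R != 0 :> F by apply/nz/fact_gt0.
have c0 : (N - k).+1%:R != 0 :> F by apply: nz.
by field; rewrite a0 b0 addrC natr1 c0.
Qed.

End Bernoulli.

Section LOnCorollas.
Variable F : fieldType.

Lemma Lf_nil (f : nat) : Lf F f [::] = 1.
Proof. by case: f. Qed.

Lemma Lf_succ (f : nat) (p : tree) : Lf F f.+1 p = (if size p == 0%N then 1 else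
     - \sum_(m <- all_masks (size p) | m != nseq (size p) true)
         (\prod_(r <- kept p m) Lf F f (forest_comp p m r)) * Echar F (quot p m)).
Proof. by []. Qed.

Lemma mask_term_corolla (f n : nat) (m : bitseq) : size m = n ->
  (\prod_(r <- kept (corolla n) m) Lf F f (forest_comp (corolla n) m r))
    * Echar F (quot (corolla n) m)
  = Lf F f (corolla (count id m)) / (n - count id m).+1%:R.
Proof.
move=> size_m; have k_eq : nedges m n = count id m by rewrite -size_m nedges_full.
rewrite quot_corolla k_eq /Echar tfact_corolla; congr (_ * _).
rewrite kept_corolla big_cons root_comp_corolla k_eq big_seq big1 ?mulr1 // => r r_in.
rewrite leaf_comp_corolla ?Lf_nil // ?kept_corolla ?inE ?r_in ?orbT //.
by move: r_in; rewrite mem_filter mem_iota; case: r.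
Qed.

Lemma Lf_corolla_rec (f n : nat) : Lf F f.+1 (corolla n.+1) =
  - \sum_(k < n.+1) 'C(n.+1, k)%:R * (Lf F f (corolla k) / (n.+1 - k).+1%:R).
Proof.
rewrite Lf_succ size_nseq -[n.+1 == 0%N]/false; congr (- _).
pose G k := if k != n.+1 then Lf F f (corolla k) / (n.+1 - k).+1%:R else 0.
transitivity (\sum_(m <- all_masks n.+1) G (count id m)).
  rewrite big_mkcond; apply: eq_big_seq => m m_in; have size_m := size_masks m_in.
  by rewrite /G full_maskE // mask_term_corolla //; case: eqP.
rewrite sum_masks big_ord_recr /= {2}/G eqxx mulr0 addr0.
by apply: eq_bigr => k _; rewrite /G (ltn_eqF (ltn_ord k)).
Qed.

Lemma Lf_corolla (hF : [pchar F] =i pred0) (N f : nat) :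
  (N <= f)%N -> Lf F f (corolla N) = bernoulli F N.
Proof.
elim/ltn_ind: N f => [[|n] IH] f N_le; first by rewrite Lf_nil.
case: f N_le => // f n_le.
rewrite Lf_corolla_rec bernoulli_rec; congr (- _); apply: eq_bigr => k _.
have k_le_f : (k <= f)%N by rewrite -ltnS (leq_trans (ltn_ord k) n_le).
by rewrite IH // mulrCA binom_div_succ // ltnW.
Qed.

End LOnCorollas.

Theorem mainTheorem12 (F : fieldType) (hF : [pchar F] =i pred0) (n : nat) :
  Lchar F (corolla n) = bernoulli F n /\
  Lsigma F (corolla n) = bernoulli F n / (n`!)%:R.
Proof.
have L_cor : Lchar F (corolla n) = bernoulli F n.
  by rewrite /Lchar size_nseq Lf_corolla.
by split => //; rewrite /Lsigma L_cor autcard_corolla.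
Qed.
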